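(* For every command $C$, store $\sigma$, real $w\ge 0$, multidistribution $\mu$ on configurations, expectation $f$ and $c\in\{\mathit{true},\mathit{false}\}$: if $\langle C,\sigma\rangle \to_w \mu$ (one step of the probabilistic reduction relation), then \[ e_c(f)(\langle C,\sigma\rangle) \;\ge\; [c]\cdot w + \mathbb{E}_\mu(e_c(f)). \]
   Context: Let $\mathrm{Var}$ be a finite set of integer-valued variables and $\Sigma = \mathrm{Var}\to\mathbb{Z}$ the set of stores; $\sigma[x\mapsto i]$ is the store updated at $x$. Boolean expressions $\varphi$ are evaluated on stores ($\sigma\models\varphi$). A distribution expression $d$ assigns to each store $\sigma$ a probability distribution $d(\sigma)$ on $\mathbb{Z}$. Commands: $C,D ::= \mathtt{skip} \mid \mathtt{tick}(r) \mid \mathtt{halt} \mid x :\approx d \mid \mathtt{if}_{[\psi]}(\varphi)\{C\}\{D\} \mid \mathtt{while}_{[\psi]}(\varphi)\{C\} \mid C \,\square\, D \mid C \oplus_p D \mid C;D$, with $r$ a nonnegative rational, $p\in[0,1]$. Expectations are functions $f:\Sigma\to[0,\infty]$, with pointwise operations, $\mathbf{r}$ the constant $r$, $[\varphi](\sigma)\in\{0,1\}$ the indicator, $[c]=1$ if $c=\mathit{true}$ and $0$ otherwise, $0\cdot\infty=0$. Transformer $\mathsf{et}_c$: $\mathsf{et}_c[\mathtt{skip}](f)=f$; $\mathsf{et}_c[\mathtt{tick}(r)](f)=[c]\cdot\mathbf{r}+f$; $\mathsf{et}_c[\mathtt{halt}](f)=\mathbf{0}$; $\mathsf{et}_c[x:\approx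 d](f)=\lambda\sigma.\sum_{i} d(\sigma)(i)\, f(\sigma[x\mapsto i])$; $\mathsf{et}_c[\mathtt{if}_{[\psi]}(\varphi)\{C\}\{D\}](f)=[\psi\wedge\varphi]\cdot\mathsf{et}_c[C](f)+[\psi\wedge\neg\varphi]\cdot\mathsf{et}_c[D](f)$; $\mathsf{et}_c[\mathtt{while}_{[\psi]}(\varphi)\{C\}](f)=\mathrm{lfp}\,F.\ [\psi\wedge\varphi]\cdot\mathsf{et}_c[C](F)+[\psi\wedge\neg\varphi]\cdot f$ (least fixed point, pointwise order); $\mathsf{et}_c[C\,\square\,D](f)=\max(\mathsf{et}_c[C](f),\mathsf{et}_c[D](f))$; $\mathsf{et}_c[C\oplus_p D](f)=\mathbf{p}\cdot\mathsf{et}_c[C](f)+\mathbf{(1-p)}\cdot\mathsf{et}_c[D](f)$; $\mathsf{et}_c[C;D](f)=\mathsf{et}_c[C](\mathsf{et}_c[D](f))$. Configurations: $\mathrm{Conf}=(\mathrm{Cmd}\times\Sigma)\cup\Sigma\cup\{\bot\}$; an active configuration is written $\langle C,\sigma\rangle$. A multidistribution on a set $A$ is a countable multiset $\mu$ of pairs $q:a$ with $a\in A$, $0<q\le1$, and $\sum_{q:a\in\mu}q\le1$; $\mathbb{E}_\mu(g)=\sum_{q:a\in\mu}q\cdot g(a)$ (with multiplicity). For $h:A\to B$, $\overline h(\{q_i:a_i\}_i)=\{q_i:h(a_i)\}_i$. A configuration $\gamma$ is identified with $\{1:\gamma\}$; entries with probability $0$ are omitted. The one-step relation $\gamma\to_w\mu$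 (with cost $w$) is the least relation closed under: $\langle\mathtt{skip},\sigma\rangle\to_0\sigma$; $\langle\mathtt{tick}(r),\sigma\rangle\to_r\sigma$; $\langle\mathtt{halt},\sigma\rangle\to_0\bot$; $\langle x:\approx d,\sigma\rangle\to_0\{d(\sigma)(i):\sigma[x\mapsto i]\mid i\in\mathbb{Z},d(\sigma)(i)>0\}$; $\langle\mathtt{if}_{[\psi]}(\varphi)\{C\}\{D\},\sigma\rangle\to_0\langle C,\sigma\rangle$ if $\sigma\models\psi\wedge\varphi$, $\to_0\langle D,\sigma\rangle$ if $\sigma\models\psi\wedge\neg\varphi$, $\to_0\bot$ if $\sigma\models\neg\psi$; $\langle\mathtt{while}_{[\psi]}(\varphi)\{C\},\sigma\rangle\to_0\langle C;\mathtt{while}_{[\psi]}(\varphi)\{C\},\sigma\rangle$ if $\sigma\models\psi\wedge\varphi$, $\to_0\sigma$ if $\sigma\models\psi\wedge\neg\varphi$, $\to_0\bot$ if $\sigma\models\neg\psi$; $\langle C\,\square\,D,\sigma\rangle\to_0\langle C,\sigma\rangle$ and $\to_0\langle D,\sigma\rangle$; $\langle C\oplus_pD,\sigma\rangle\to_0\{p:\langle C,\sigma\rangle,1-p:\langle D,\sigma\rangle\}$; if $\langle C,\sigma\rangle\to_r\mu$ then $\langle C;D,\sigma\rangle\to_r\overline{\kappa_D}(\mu)$, where $\kappa_D(\langle C',\sigma'\rangle)=\langle C';D,\sigma'\rangle$, $\kappa_D(\sigma')=\langle D,\sigma'\rangle$, $\kappa_D(\bot)=\bot$. For an expectation $f$,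 $e_c(f):\mathrm{Conf}\to[0,\infty]$ is defined by $e_c(f)(\langle C,\sigma\rangle)=\mathsf{et}_c[C](f)(\sigma)$, $e_c(f)(\sigma)=f(\sigma)$, $e_c(f)(\bot)=0$. *)

From HB Require Import structures.
From mathcomp Require Import all_boot all_order all_algebra.
From mathcomp Require Import all_classical all_reals all_analysis.
Set Implicit Arguments. Unset Strict Implicit. Unset Printing Implicit Defensive.
Import Order.TTheory GRing.Theory Num.Theory.
Local Open Scope classical_set_scope.
Local Open Scope ring_scope.
Local Open Scope ereal_scope.

Section Lang.
Variable R : realType.
Variable Var : finType.

Definition store := Var -> int.
Definition upd (s : store) (x : Var) (i : int) : store :=
  fun y => if y == x then i else s y.

Definition bexp := store -> bool.
(* distribution expressions: assign to each store a (sub)function Z -> R;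
   well-formedness (being a probability distribution) is in [wf_cmd] *)
Definition dexp := store -> int -> R.

Inductive cmd : Type :=
| Skip
| Tick of rat
| Halt
| Sample of Var & dexp
| If of bexp & bexp & cmd & cmd
| While of bexp & bexp & cmd
| NDet of cmd & cmd
| PChoice of cmd & R & cmd
| Seq of cmd & cmd.

Definition is_prob_distr (mu : int -> R) : Prop :=
  (forall i, (0 <= mu i)%R) /\ \esum_(i in [set: int]) (mu i)%:E = 1.

Fixpoint wf_cmd (C : cmd) : Prop :=
  match C with
  | Skip | Halt => True
  | Tick r => (0 <= r)%R
  | Sample _ d => forall s, is_prob_distr (d s)
  | If _ _ C D | NDet C D | Seq C D => wf_cmd C /\ wf_cmd D
  | While _ _ C => wf_cmd C
  | PChoice C p D => [/\ (0 <= p)%R, (p <= 1)%R, wf_cmd C & wf_cmd D]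
  end.

Definition expect := store -> \bar R.
Definition nonneg_exp (f : expect) : Prop := forall s, 0 <= f s.

Definition iverson (b : bool) : \bar R := if b then 1 else 0.

(* least fixed point on the complete lattice ([0,oo]^Sigma, pointwise order),
   as the meet of all prefixed points (Knaster--Tarski) *)
Definition lfp_exp (F : expect -> expect) : expect :=
  fun s => ereal_inf [set g s | g in
             [set g : expect | nonneg_exp g /\ forall t, F g t <= g t]].

Fixpoint et (c : bool) (C : cmd) (f : expect) {struct C} : expect :=
  match C with
  | Skip => f
  | Tick r => fun s => iverson c * (ratr r)%:E + f s
  | Halt => fun _ => 0
  | Sample x d => fun s => \esum_(i in [set: int]) (d s i)%:E * f (upd s x i)
  | If psi phi C D => fun s =>
      iverson (psi s && phi s) * et c C f s + iverson (psi s && ~~ phi s) * et c D f s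
  | While psi phi C =>
      lfp_exp (fun F s => iverson (psi s && phi s) * et c C F s
                      + iverson (psi s && ~~ phi s) * f s)
  | NDet C D => fun s => maxe (et c C f s) (et c D f s)
  | PChoice C p D => fun s => p%:E * et c C f s + (1 - p)%:E * et c D f s
  | Seq C D => et c C (et c D f)
  end.

Inductive conf : Type :=
| Active of cmd & store
| Term of store
| Bot.

(* multidistributions on A: countable multisets of pairs q:a, represented as a
   nat-indexed family of optional entries (None = no entry) *)
Definition multidist (A : Type) := nat -> option (R * A).

Definition is_multidist (A : Type) (mu : multidist A) : Prop :=
  (forall n q a, mu n = Some (q, a) -> (0 < q)%R /\ (q <= 1)%R) /\
  \esum_(n in [set: nat]) (match mu n with Some (q, _) => q%:E | None => 0 end) <= 1.

Definition mexp (A : Type) (mu : multidist A) (g : A -> \bar R) : \bar R :=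
  \esum_(n in [set: nat]) (match mu n with Some (q, a) => q%:E * g a | None => 0 end).

Definition mmap (A B : Type) (h : A -> B) (mu : multidist A) : multidist B :=
  fun n => match mu n with Some (q, a) => Some (q, h a) | None => None end.

Definition mdirac (A : Type) (a : A) : multidist A :=
  fun n => if n is 0%N then Some (1%R, a) else None.

Definition pair_md (A : Type) (p : R) (a b : A) : multidist A :=
  fun n => match n with
           | 0%N => if (0 < p)%R then Some (p, a) else None
           | 1%N => if (0 < 1 - p)%R then Some ((1 - p)%R, b) else None
           | _ => None
           end.

(* {d(s)(i) : s[x |-> i] | i in Z, d(s)(i) > 0}, enumerating Z through the
   bijection pickle between int and (a subset of) nat *)
Definition sample_md (x : Var) (d : dexp) (s : store) : multidist conf :=
  fun n => match @pickle_inv int n with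
           | Some i => if (0 < d s i)%R then Some (d s i, Term (upd s x i)) else None
           | None => None
           end.

Definition kappa (D : cmd) (g : conf) : conf :=
  match g with
  | Active C' s' => Active (Seq C' D) s'
  | Term s' => Active D s'
  | Bot => Bot
  end.

Inductive pstep : cmd -> store -> R -> multidist conf -> Prop :=
| st_skip s : pstep Skip s 0 (mdirac (Term s))
| st_tick r s : pstep (Tick r) s (ratr r) (mdirac (Term s))
| st_halt s : pstep Halt s 0 (mdirac Bot)
| st_sample x d s : pstep (Sample x d) s 0 (sample_md x d s)
| st_if_t psi phi C D s : psi s && phi s ->
    pstep (If psi phi C D) s 0 (mdirac (Active C s))
| st_if_f psi phi C D s : psi s && ~~ phi s ->
    pstep (If psi phi C D) s 0 (mdirac (Active D s))
| st_if_bot psi phi C D s : ~~ psi s ->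
    pstep (If psi phi C D) s 0 (mdirac Bot)
| st_while_t psi phi C s : psi s && phi s ->
    pstep (While psi phi C) s 0 (mdirac (Active (Seq C (While psi phi C)) s))
| st_while_f psi phi C s : psi s && ~~ phi s ->
    pstep (While psi phi C) s 0 (mdirac (Term s))
| st_while_bot psi phi C s : ~~ psi s ->
    pstep (While psi phi C) s 0 (mdirac Bot)
| st_ndet_l C D s : pstep (NDet C D) s 0 (mdirac (Active C s))
| st_ndet_r C D s : pstep (NDet C D) s 0 (mdirac (Active D s))
| st_pchoice C p D s :
    pstep (PChoice C p D) s 0 (pair_md p (Active C s) (Active D s))
| st_seq C D s r mu : pstep C s r mu -> pstep (Seq C D) s r (mmap (kappa D) mu).

Definition ec (c : bool) (f : expect) (g : conf) : \bar R :=
  match g with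
  | Active C s => et c C f s
  | Term s => f s
  | Bot => 0
  end.

End Lang.

(* For the deterministic and the
   probabilistic rules the expected value of [e_c(f)] after one step is exactly
   the clause of [et] for the command, and for [C [] D] it is one argument of
   the maximum. For [while] the least fixed point [L] is a prefixed point of its
   functional [F] (Knaster-Tarski: [L] lies below every prefixed point [g], so
   [F L <= F g <= g] by monotonicity of [et]), which gives the inequality.
   For [C; D] the continuation [kappa_D] turns [e_c(f)] into [e_c(et_c[D] f)],
   so the claim is the induction hypothesis for the post-expectation
   [et_c[D] f]. *)
From HB Require Import structures.
From mathcomp Require Import all_boot all_order all_algebra.
From mathcomp Require Import all_classical all_reals all_analysis.
Set Implicit Arguments. Unset Strict Implicit.
Import Order.TTheory GRing.Theory Num.Theory.
Local Open Scope ring_scope.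
Local Open Scope ereal_scope.

Section ExpectedValue.
Variable R : realType.

Lemma esum_pred1 (T : choiceType) (k : T) (v : \bar R) : 0 <= v ->
  \esum_(n in [set: T]) (if n == k then v else 0) = v.
Proof.
move=> v0; rewrite -[RHS](@esum_set1 R T k (fun=> v) v0) [RHS]esum_mkcond.
apply: eq_esum => n _; congr (if _ then _ else _).
by apply/eqP/idP => [->|/set_mem //]; exact/mem_set.
Qed.

Variable A : Type.

Lemma mexp_dirac (a : A) (g : A -> \bar R) : 0 <= g a ->
  mexp (mdirac R a) g = g a.
Proof.
move=> ga; rewrite /mexp -[RHS](esum_pred1 0%N ga).
by apply: eq_esum => -[|n] _ //=; rewrite mul1e.
Qed.

Lemma mexp_pair (p : R) (a b : A) (g : A -> \bar R) :
  (0 <= p <= 1)%R -> 0 <= g a -> 0 <= g b ->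
  mexp (pair_md p a b) g = p%:E * g a + (1 - p)%:E * g b.
Proof.
move=> /andP[p0 p1] ga gb.
have pa0 : 0 <= p%:E * g a by apply: mule_ge0.
have pb0 : 0 <= (1 - p)%:E * g b by apply: mule_ge0; rewrite // lee_fin subr_ge0.
rewrite -(esum_pred1 0%N pa0) -(esum_pred1 1%N pb0) -esumD; last 2 first.
- by move=> n _; case: ifP.
- by move=> n _; case: ifP.
(* the entries of probability [0] omitted by [pair_md] contribute [0 * g _] *)
apply: eq_esum => -[|[|n]] _ /=; rewrite ?adde0 ?add0e //.
- by rewrite lt_def p0 andbT; case: eqP => [->|]; rewrite ?mul0e.
- by rewrite lt_def subr_ge0 p1 andbT; case: eqP => [->|]; rewrite ?mul0e.
Qed.

Lemma mexp_mmap (B : Type) (h : A -> B) (mu : multidist R A) (g : B -> \bar R) :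
  mexp (mmap h mu) g = mexp mu (g \o h).
Proof. by apply: eq_esum => n _; rewrite /mmap; case: (mu n) => [[]|]. Qed.

End ExpectedValue.

Section Transformer.
Variables (R : realType) (Var : finType) (c : bool).
Implicit Types (C : cmd R Var) (f g : expect R Var) (s : store Var).

Lemma iverson_ge0 b : 0 <= iverson R b.
Proof. by case: b. Qed.

Lemma et_ge0 C f : wf_cmd C -> nonneg_exp f -> forall s, 0 <= et c C f s.
Proof.
elim: C f => [|r||x d|psi phi C IC D ID|psi phi C _|C IC D _|C IC p D ID|C IC D ID]
  f wC f0 s //=.
- by rewrite adde_ge0 ?mule_ge0 ?iverson_ge0 ?lee_fin ?ler0q.
- by apply: esum_ge0 => i _; rewrite mule_ge0 // lee_fin; case: (wC s).
- by case: wC => wC wD; rewrite adde_ge0 ?mule_ge0 ?iverson_ge0 ?IC ?ID.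
- by apply: le_ereal_inf_tmp => _ [g [g0 _] <-].
- by case: wC => wC _; rewrite le_max IC.
- case: wC => p0 p1 wC wD.
  by rewrite adde_ge0 ?mule_ge0 ?IC ?ID ?lee_fin ?subr_ge0.
- by case: wC => wC wD; apply: IC => //; exact: ID.
Qed.

Lemma le_et C f g : wf_cmd C -> nonneg_exp f -> nonneg_exp g ->
  (forall s, f s <= g s) -> forall s, et c C f s <= et c C g s.
Proof.
elim: C f g => [|r||x d|psi phi C IC D ID|psi phi C _|C IC D ID|C IC p D ID|C IC D ID]
  f g wC f0 g0 fg s //=.
- exact: leeD.
- by apply: le_esum => i _; rewrite lee_wpmul2l // lee_fin; case: (wC s).
- by case: wC => wC wD; rewrite leeD ?lee_wpmul2l ?iverson_ge0 ?IC ?ID.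
- apply: le_ereal_inf_tmp => _ [h [h0 hpre] <-]; apply: ereal_inf_lbound.
  exists h => //; split => // t; apply: le_trans (hpre t).
  by rewrite leeD2l // lee_wpmul2l ?iverson_ge0.
- by case: wC => wC wD; rewrite ge_max !le_max IC // ID // orbT.
- case: wC => p0 p1 wC wD.
  by rewrite leeD ?lee_wpmul2l ?IC ?ID ?lee_fin ?subr_ge0.
- by case: wC => wC wD; apply: IC => //; [exact: et_ge0|exact: et_ge0|exact: ID].
Qed.

Lemma et_while_prefixed psi phi C f : wf_cmd C -> nonneg_exp f -> forall s,
  iverson R (psi s && phi s) * et c C (et c (While psi phi C) f) s
  + iverson R (psi s && ~~ phi s) * f s <= et c (While psi phi C) f s.
Proof.
move=> wC f0 s; set L := et c (While psi phi C) f.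
have L_min g : nonneg_exp g ->
    (forall t, iverson R (psi t && phi t) * et c C g t
               + iverson R (psi t && ~~ phi t) * f t <= g t) ->
    forall t, L t <= g t.
  by move=> g0 gpre t; apply: ereal_inf_lbound; exists g.
apply: le_ereal_inf_tmp => _ [g [g0 gpre] <-]; apply: le_trans (gpre s).
rewrite leeD2r // lee_wpmul2l ?iverson_ge0 //.
by apply: le_et => //; [exact: et_ge0|exact: L_min].
Qed.

Lemma mexp_sample x (d : dexp R Var) s (h : conf R Var -> \bar R) :
  (forall i, (0 <= d s i)%R) ->
  mexp (sample_md x d s) h = \esum_(i in [set: int]) (d s i)%:E * h (Term _ (upd s x i)).
Proof.
move=> d0; pose G n := if @pickle_inv int n is Some i
  then (d s i)%:E * h (Term _ (upd s x i)) else 0.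
transitivity (\esum_(n in [set: nat]) G n).
  apply: eq_esum => n _; rewrite /sample_md /G; case: pickle_inv => // i.
  by rewrite lt_def d0 andbT; case: eqP => [->|]; rewrite ?mul0e.
(* [G] vanishes outside the range of [pickle], which is injective on [int] *)
transitivity (\esum_(n in range (@pickle int)) G n).
  rewrite [RHS]esum_mkcond; apply: eq_esum => n _.
  case E: (pickle_inv n) => [i|]; last by rewrite /G E; case: ifP.
  have := @pickle_invK int n; rewrite E /= => <-.
  by rewrite ifT //; apply/mem_set; exists i.
rewrite (esum_image _ _ _ (in2W (pcan_inj (@pickleK_inv int)))).
by apply: eq_esum => i _; rewrite /G pickleK_inv.
Qed.

End Transformer.

Theorem mainTheorem3 (R : realType) (Var : finType) (C : cmd R Var)
    (s : store Var) (w : R) (mu : multidist R (conf R Var)) (f : expect R Var)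
    (c : bool) :
  wf_cmd C -> (0 <= w)%R -> is_multidist mu -> nonneg_exp f ->
  pstep C s w mu ->
  (iverson R c * w%:E + mexp mu (ec c f)) <= ec c f (Active C s).
Proof.
move=> wC _ _ f0 st; elim: st f f0 wC => {C s w mu}
  [s|r s|s|x d s|psi phi C D s h|psi phi C D s h|psi phi C D s h
  |psi phi C s h|psi phi C s h|psi phi C s h|C D s|C D s|C p D s|C D s r mu _ IH]
  f f0 /=.
- by rewrite mexp_dirac //= mule0 add0e.
- by rewrite mexp_dirac //=.
- by rewrite mexp_dirac //= mule0 add0e.
- by move=> wd; rewrite mexp_sample //= ?mule0 ?add0e // => i; case: (wd s).
- case/andP: h => -> -> [wC wD]; rewrite mexp_dirac ?et_ge0 //=.
  by rewrite mule0 !add0e mul1e mul0e adde0.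
- case/andP: h => -> /negbTE -> [wC wD]; rewrite mexp_dirac ?et_ge0 //=.
  by rewrite mule0 mul0e !add0e mul1e.
- by rewrite (negbTE h) mexp_dirac //= mule0 !mul0e !add0e.
- case/andP: h => psi_s phi_s wC.
  rewrite mexp_dirac /=; last exact: (et_ge0 c (C := Seq C (While _ _ _)) (conj wC wC) f0).
  apply: le_trans (et_while_prefixed c psi phi wC f0 s).
  by rewrite psi_s phi_s mule0 add0e mul1e mul0e adde0.
- case/andP: h => psi_s /negbTE phi_s wC; rewrite mexp_dirac //=.
  apply: le_trans (et_while_prefixed c psi phi wC f0 s).
  by rewrite psi_s phi_s mule0 add0e mul1e mul0e add0e.
- move=> wC; rewrite mexp_dirac //= mule0 add0e.
  exact: (et_ge0 c (C := While psi phi C)).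
- by case=> wC wD; rewrite mexp_dirac /= ?et_ge0 // mule0 add0e le_max lexx.
- by case=> wC wD; rewrite mexp_dirac /= ?et_ge0 // mule0 add0e le_max lexx orbT.
- by case=> p0 p1 wC wD; rewrite mexp_pair ?p0 /= ?et_ge0 // mule0 add0e.
- case=> wC wD; rewrite mexp_mmap.
  have -> : ec c f \o kappa D = ec c (et c D f) by apply/funext => -[].
  exact: IH (et_ge0 c wD f0) wC.
Qed.
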